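(* Let $\phi$ be a partial listing of $A$ and let $\alpha'=\alpha_k\cdots\alpha_{l+1}$ be a prefix of $A$ (with $2\le l+1\le k$). Then (1) $\alpha'$ is non-empty if and only if $\phi(\alpha'0\cdots0)=1$; and (2) $\alpha'$ is full if and only if $\phi(\alpha'(a_l-1)(a_{l-1}-1)\cdots(a_2-1))=1$.
   Context: Let $k\ge 2$ and let $a_k,\dots,a_2$ be positive integers with $a_2\le a_i$ for all $2<i\le k$. Let $A=[a_k]\times\cdots\times[a_2]$, where $[a]=\{0,\dots,a-1\}$; elements are written $\alpha=\alpha_k\alpha_{k-1}\cdots\alpha_2$. A prefix of $\alpha$ is $\alpha_k\cdots\alpha_{l+1}$ for some $2\le l+1\le k$; $\varnothing$ denotes the empty prefix; for a tuple $\beta=\alpha_k\cdots\alpha_{l+1}$ and $i$, $\beta i$ denotes $\alpha_k\cdots\alpha_{l+1}i$. An array $\phi:A\to\{0,1\}$ is initialized to $0$ everywhere. A tuple $\beta$ (a prefix or an element) is non-empty if some $\alpha\in A$ having $\beta$ as a prefix (or equal to $\beta$) has $\phi(\alpha)=1$, empty otherwise, and full if all such $\alpha$ have $\phi(\alpha)=1$. The procedure Next$(\beta)$, for $\beta=\alpha_k\cdots\alpha_{l+1}$ (with $l=k$ for $\beta=\varnothing$): let $m$ be the least $i$ such that $\beta i$ is empty; if $l=2$, set $\phi(\beta m):=1$ and stop; otherwise, if $m\ge a_2$, replace $m$ by the least $i$ such that $\beta i$ is not full; then call Next$(\beta m)$. A partial listing of $A$ is an array $\phi$ obtained from the all-zero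 array by finitely many calls of Next$(\varnothing)$. *)

From mathcomp Require Import all_boot.
Set Implicit Arguments. Unset Strict Implicit. Unset Printing Implicit Defensive.

(* Parameters: k : nat and a : nat -> nat (only a 2, ..., a k matter).
   A tuple alpha_k alpha_(k-1) ... alpha_(l+1) is represented by the sequence
   [:: alpha_k; ...; alpha_(l+1)] : seq nat, so position j holds coordinate k - j,
   and a tuple of size p has l = k - p (the empty prefix has l = k).
   The tuple "beta i" is  rcons beta i.  An array phi : A -> {0,1} is a
   function seq nat -> bool (its values outside A are irrelevant). *)

(* Membership in A = [a_k] x ... x [a_2]. *)
Definition inA (k : nat) (a : nat -> nat) (alpha : seq nat) : Prop :=
  size alpha = k - 1 /\ forall j, j < k - 1 -> nth 0 alpha j < a (k - j).

Definition nonempty (k : nat) (a : nat -> nat) (phi : seq nat -> bool)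
  (beta : seq nat) : Prop :=
  exists alpha, [/\ inA k a alpha, prefix beta alpha & phi alpha].

Definition empty k a phi beta : Prop := ~ nonempty k a phi beta.

Definition full (k : nat) (a : nat -> nat) (phi : seq nat -> bool)
  (beta : seq nat) : Prop :=
  forall alpha, inA k a alpha -> prefix beta alpha -> phi alpha.

Definition least (P : nat -> Prop) (m : nat) : Prop :=
  P m /\ forall j, j < m -> ~ P j.

Definition setone (phi : seq nat -> bool) (x : seq nat) : seq nat -> bool :=
  fun s => (s == x) || phi s.

(* Next k a phi beta phi' : the call Next(beta) on array phi terminates with
   array phi'.  (Relational semantics: a call whose "least i" does not exist
   does not produce any array.) *)
Inductive Next (k : nat) (a : nat -> nat) :
  (seq nat -> bool) -> seq nat -> (seq nat -> bool) -> Prop :=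
| Next_last phi beta m :
    k - size beta = 2 ->
    least (fun i => empty k a phi (rcons beta i)) m ->
    Next k a phi beta (setone phi (rcons beta m))
| Next_rec phi beta m m' phi' :
    2 < k - size beta ->
    least (fun i => empty k a phi (rcons beta i)) m ->
    (if m < a 2 then m' = m
     else least (fun i => ~ full k a phi (rcons beta i)) m') ->
    Next k a phi (rcons beta m') phi' ->
    Next k a phi beta phi'.

Inductive partial_listing (k : nat) (a : nat -> nat) : (seq nat -> bool) -> Prop :=
| pl_zero : partial_listing k a (fun _ => false)
| pl_next phi phi' :
    partial_listing k a phi -> Next k a phi [::] phi' -> partial_listing k a phi'.

(** In a partial listing, below every inner node the nonempty children and the
    full children both form initial segments [0, ..., j).  This invariant
    survives a call of Next: the recursion enters the least empty child, or,
    once the children [0, ..., a_2 - 1) are nonempty, the least non-full one,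
    so it only ever extends those initial segments.  Given the invariant, a
    prefix is nonempty iff its child 0 is nonempty and full iff its last child
    is full; descending to the leaves gives the two characterisations. *)

From mathcomp Require Import all_boot zify.
From Stdlib Require Import Classical.

Set Implicit Arguments.
Unset Strict Implicit.

Section Prefix.
Variable T : eqType.
Implicit Types s : seq T.

Lemma prefix_rcons_nth x0 s1 s2 : prefix s1 s2 -> size s1 < size s2 ->
  prefix (rcons s1 (nth x0 s2 (size s1))) s2.
Proof. by rewrite !prefixE size_rcons => /eqP hs1 hs; rewrite (take_nth x0 hs) hs1. Qed.

Lemma prefix_leq_size s1 s2 s : prefix s1 s -> prefix s2 s ->
  size s1 <= size s2 -> prefix s1 s2.
Proof. by rewrite !prefixE => /eqP h1 /eqP h2 hs; rewrite -h2 take_takel // h1. Qed.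

Lemma prefix_eq_size s1 s2 s : prefix s1 s -> prefix s2 s ->
  size s1 = size s2 -> s1 = s2.
Proof. by rewrite !prefixE => /eqP h1 /eqP h2 hs; rewrite -h1 -h2 hs. Qed.

Lemma prefix_rcons_inj s x y s' : prefix (rcons s x) s' -> prefix (rcons s y) s' ->
  x = y.
Proof.
move=> hx hy; have := prefix_eq_size hx hy; rewrite !size_rcons => /(_ erefl).
by rewrite -!cats1 => /eqP; rewrite eqseq_cat // => /andP[_ /eqP[]].
Qed.

End Prefix.

Lemma least_lt (P : nat -> Prop) m i : least (fun j => ~ P j) m -> i < m -> P i.
Proof. by move=> [_ hm] /hm; apply: NNPP. Qed.

Section Listing.
Variables (k : nat) (a : nat -> nat).
Hypothesis a_gt0 : forall i, 2 <= i <= k -> 0 < a i.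
Implicit Types (g b x y : seq nat) (phi : seq nat -> bool).

Definition prefixA (g : seq nat) :=
  size g <= k - 1 /\ forall j, j < size g -> nth 0 g j < a (k - j).

Lemma inA_cat g s : prefixA g -> size g + size s = k - 1 ->
  (forall j, j < size s -> nth 0 s j < a (k - size g - j)) -> inA k a (g ++ s).
Proof.
move=> [_ hg] hs hsa; split=> [|j hj]; first by rewrite size_cat.
rewrite nth_cat; case: ifP => hjg; first exact: hg.
by rewrite (_ : k - j = k - size g - (j - size g)); [apply: hsa|]; lia.
Qed.

Lemma inA_zeros g : prefixA g -> inA k a (g ++ nseq (k - 1 - size g) 0).
Proof.
move=> hg; apply: inA_cat; rewrite ?size_nseq //; first by case: hg; lia.
by move=> j hj; rewrite nth_nseq hj; apply: a_gt0; lia.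
Qed.

Lemma prefixA_rcons g j : prefixA g -> size g < k - 1 -> j < a (k - size g) ->
  prefixA (rcons g j).
Proof.
move=> [_ hg] hs hj; split=> [|i]; rewrite size_rcons // ltnS nth_rcons => hi.
by case: (ltngtP i (size g)) hi => // [hlt _|-> _]; [apply: hg|].
Qed.

Lemma prefixA_inA g x : inA k a x -> prefix g x -> prefixA g.
Proof.
move=> [hx hxa] /prefixP[s ex]; rewrite ex size_cat in hx hxa.
split=> [|j hj]; first lia.
by have := hxa j; rewrite nth_cat hj; apply; lia.
Qed.

Lemma inA_prefixA g : prefixA g -> size g = k - 1 -> inA k a g.
Proof. by move=> [_ hg] hs; split=> // j; rewrite -hs; apply: hg. Qed.

Lemma eq_inA_prefix g x : inA k a g -> inA k a x -> prefix g x -> x = g.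
Proof.
move=> [hg _] [hx _] hgx.
by apply: prefix_eq_size (prefix_refl x) hgx _; rewrite hg hx.
Qed.

Lemma nonempty_inA phi g : inA k a g -> nonempty k a phi g <-> phi g.
Proof.
move=> hg; split=> [[x [hx hgx]]|hphi]; first by rewrite -(eq_inA_prefix hg hx hgx).
by exists g; split=> //; apply: prefix_refl.
Qed.

Lemma full_inA phi g : inA k a g -> full k a phi g <-> phi g.
Proof.
move=> hg; split=> [|hphi x hx hgx]; first by apply; rewrite ?prefix_refl.
by rewrite (eq_inA_prefix hg hx hgx).
Qed.

Lemma full_nonempty phi g : prefixA g -> full k a phi g -> nonempty k a phi g.
Proof.
move=> hg hf; have hz := inA_zeros hg.
by exists (g ++ nseq (k - 1 - size g) 0); split;
  [done | exact: prefix_prefix | exact: hf hz (prefix_prefix _ _)].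
Qed.

Lemma setone_mono phi x g :
  (nonempty k a phi g -> nonempty k a (setone phi x) g) /\
  (full k a phi g -> full k a (setone phi x) g).
Proof.
split=> [[y [hy hgy hphi]]|hf y hy hgy]; last by rewrite /setone hf ?orbT.
by exists y; split; rewrite /setone ?hphi ?orbT.
Qed.

Lemma setone_off phi x g :
  (forall y, inA k a y -> prefix g y -> y != x) ->
  (nonempty k a (setone phi x) g <-> nonempty k a phi g) /\
  (full k a (setone phi x) g <-> full k a phi g).
Proof.
move=> hx; have hphi y : inA k a y -> prefix g y -> setone phi x y = phi y.
  by move=> hy hgy; rewrite /setone (negbTE (hx y hy hgy)).
split; split; try by case: (setone_mono phi x g).
- by move=> [y [hy hgy]]; rewrite hphi // => hy'; exists y.
- by move=> hf y hy hgy; rewrite -hphi ?hf.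
Qed.

Lemma setone_empty_not_full phi x g : prefixA g -> size g < k - 1 -> 1 < a 2 ->
  empty k a phi g -> ~ full k a (setone phi x) g.
Proof.
(* g has two leaves, with last coordinate 0 and 1, and only one of them is x *)
move=> hg hs ha2 hempty hf; set n := k - 1 - size g.
have hy0 := inA_zeros hg.
have hy1 : inA k a (g ++ rcons (nseq n.-1 0) 1).
  apply: inA_cat; rewrite ?size_rcons ?size_nseq // /n; first lia.
  move=> j hj; rewrite nth_rcons size_nseq; case: (ltngtP j n.-1) => hjn.
  - by rewrite nth_nseq hjn; apply: a_gt0; lia.
  - lia.
  - by rewrite (_ : k - size g - j = 2) //; lia.
have eqx y : inA k a y -> prefix g y -> y = x.
  move=> hy hgy; have := hf y hy hgy; case/orP => [/eqP //|hphi].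
  by case: hempty; exists y.
have := congr1 (nth 0 ^~ (size g + n.-1))
  (etrans (eqx _ hy0 (prefix_prefix _ _)) (esym (eqx _ hy1 (prefix_prefix _ _)))).
rewrite !nth_cat ltnNge leq_addr /= addKn nth_nseq nth_rcons size_nseq ltnn eqxx.
by case: ifP.
Qed.

Definition children_mono phi g := forall i j, i < j -> j < a (k - size g) ->
  (nonempty k a phi (rcons g j) -> nonempty k a phi (rcons g i)) /\
  (full k a phi (rcons g j) -> full k a phi (rcons g i)).

Definition mono_listing phi :=
  forall g, prefixA g -> size g < k - 1 -> children_mono phi g.

Definition mono_except_ancestors b phi := forall g, prefixA g -> size g < k - 1 ->
  ~ (prefix g b /\ size g < size b) -> children_mono phi g.

Lemma children_mono_setone_off phi x g : children_mono phi g ->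
  (forall y, inA k a y -> prefix g y -> y != x) ->
  children_mono (setone phi x) g.
Proof.
move=> hmono hx i j hij hj.
have off c : forall y, inA k a y -> prefix (rcons g c) y -> y != x.
  by move=> y hy /(prefix_trans (prefix_rcons g c)); apply: hx.
have [ne_i full_i] := setone_off phi (off i).
have [ne_j full_j] := setone_off phi (off j).
have [ne_ji full_ji] := hmono i j hij hj.
by split=> [/ne_j/ne_ji/ne_i|/full_j/full_ji/full_i].
Qed.

Lemma children_mono_setone phi g x c : children_mono phi g ->
  prefix (rcons g c) x ->
  (forall i, i < c -> c < a (k - size g) ->
     nonempty k a (setone phi x) (rcons g i) /\
     (full k a (setone phi x) (rcons g c) -> full k a (setone phi x) (rcons g i))) ->
  children_mono (setone phi x) g.
Proof.
move=> hmono hcx hc i j; case: (eqVneq j c) => [-> hic hca|hjc hij hj].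
  by have [ne_i full_i] := hc i hic hca; split.
have off y : inA k a y -> prefix (rcons g j) y -> y != x.
  move=> _ hjy; apply: contra_neq hjc => eyx.
  by rewrite eyx in hjy; apply: prefix_rcons_inj hjy hcx.
have [ne_j full_j] := setone_off phi off.
have [ne_ji full_ji] := hmono i j hij hj.
have [mono_ne mono_full] := setone_mono phi x (rcons g i).
by split=> [/ne_j/ne_ji/mono_ne|/full_j/full_ji/mono_full].
Qed.

Lemma Next_setone phi b phi' : Next k a phi b phi' ->
  exists x, prefix b x /\ phi' = setone phi x.
Proof.
elim=> {phi b phi'} [phi b m _ _|phi b m m' phi' _ _ _ _ [x [hx ->]]].
  by exists (rcons b m); rewrite prefix_rcons.
by exists x; split=> //; apply: prefix_trans (prefix_rcons b m') hx.
Qed.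

Lemma mono_except_ancestors_setone phi b x : mono_listing phi -> prefix b x ->
  (prefixA b -> size b < k - 1 -> inA k a x -> children_mono (setone phi x) b) ->
  (forall g, prefixA g -> size g < k - 1 -> size b < size g -> prefix g x ->
     inA k a x -> children_mono (setone phi x) g) ->
  mono_except_ancestors b (setone phi x).
Proof.
move=> hmono hbx hb hdesc g hg hgs hgb.
have [hgx|hgx] := boolP (prefix g x); last first.
  apply: children_mono_setone_off (hmono g hg hgs) _ => y _ hgy.
  by apply: contraNneq hgx => <-.
have [hx|hx] := classic (inA k a x); last first.
  apply: children_mono_setone_off (hmono g hg hgs) _ => y hy _.
  by apply: contra_not_neq hx => <-.
case: (ltnP (size b) (size g)) => hbg; first exact: hdesc.
have egb : g = b.
  apply: (prefix_eq_size hgx hbx); apply/eqP; rewrite eqn_leq hbg /= leqNgt.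
  by apply/negP => hlt; apply: hgb; rewrite (prefix_leq_size hgx hbx hbg) hlt.
by rewrite egb in hg hgs *; apply: hb.
Qed.

Lemma Next_mono phi b phi' : Next k a phi b phi' ->
  mono_listing phi -> prefixA b -> mono_except_ancestors b phi'.
Proof.
elim=> {phi b phi'} [phi b m hsb hm|phi b m m' phi' hsb hm hm' hN IH] hmono hb.
  apply: (mono_except_ancestors_setone hmono (prefix_rcons b m)); last first.
    by move=> g _ hgs hbg; lia.
  move=> _ hbs _; apply: (children_mono_setone (hmono b hb hbs) (prefix_refl _)).
  move=> i him hma; have hi := proj1 (setone_mono phi (rcons b m) _) (least_lt hm him).
  have hiA : inA k a (rcons b i).
    by apply: inA_prefixA; [apply: prefixA_rcons => //|rewrite size_rcons]; lia.
  by split=> // _; apply/(full_inA _ hiA)/(nonempty_inA _ hiA).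
have [x [hbx ephi']] := Next_setone hN; subst phi'.
apply: (mono_except_ancestors_setone hmono (prefix_trans (prefix_rcons b m') hbx)).
  move=> _ hbs hx; apply: (children_mono_setone (hmono b hb hbs) hbx).
  move=> i hi hma; have hbi : prefixA (rcons b i) by apply: prefixA_rcons => //; lia.
  have [mono_ne mono_full] := setone_mono phi x (rcons b i).
  move: hm'; case: ifP => [hma2 em'|_ hm']; last first.
    have hfi := least_lt hm' hi.
    by split=> [|_]; [apply/mono_ne/full_nonempty|apply: mono_full].
  subst m'; split=> [|hfull]; first exact/mono_ne/(least_lt hm).
  case: (setone_empty_not_full (prefixA_inA hx hbx) _ _ (proj1 hm) hfull);
    rewrite ?size_rcons; lia.
move=> g hg hgs hbg _ hx; apply: (IH hmono (prefixA_inA hx hbx)) => // [[_]].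
by rewrite size_rcons; lia.
Qed.

Lemma partial_listing_mono phi : partial_listing k a phi -> mono_listing phi.
Proof.
elim=> {phi} [g hg hgs i j hij hj|phi phi' _ hmono hN g hg hgs].
  have hgj : prefixA (rcons g j) by apply: prefixA_rcons => //; lia.
  by split=> [[y []]|/(full_nonempty hgj)[y []]].
have hnil : prefixA [::] by split.
by apply: (Next_mono hN hmono hnil) => // [[_]].
Qed.

Lemma inA_prefix_child g y : inA k a y -> prefix g y -> size g < k - 1 ->
  exists2 j, j < a (k - size g) & prefix (rcons g j) y.
Proof.
move=> [hy hya] hgy hgs; exists (nth 0 y (size g)); first by apply: hya; lia.
by apply: prefix_rcons_nth; rewrite // hy.
Qed.

Lemma nonempty_zeros phi : mono_listing phi -> forall n g, prefixA g ->
  size g + n = k - 1 -> nonempty k a phi g <-> phi (g ++ nseq n 0).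
Proof.
move=> hmono; elim=> [|n IH] g hg hs.
  by rewrite cats0; apply: nonempty_inA; apply: inA_prefixA => //; lia.
have hg0 : prefixA (rcons g 0) by apply: prefixA_rcons => //; [|apply: a_gt0]; lia.
rewrite /= -cat_rcons -IH ?size_rcons //; last lia.
split=> [[y [hy hgy hphi]]|]; last first.
  move=> [y [hy hgy hphi]]; exists y; split=> //.
  exact: prefix_trans (prefix_rcons g 0) hgy.
have [|j hja hgjy] := inA_prefix_child hy hgy; first lia.
have hne : nonempty k a phi (rcons g j) by exists y.
case: (posnP j) => [<- //|hj0].
by apply: (proj1 (hmono g hg _ 0 j hj0 hja)) => //; lia.
Qed.

Lemma full_maxs phi : mono_listing phi -> forall n g, prefixA g ->
  size g + n = k - 1 ->
  full k a phi g <-> phi (g ++ [seq a i - 1 | i <- rev (iota 2 n)]).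
Proof.
move=> hmono; elim=> [|n IH] g hg hs.
  by rewrite cats0; apply: full_inA; apply: inA_prefixA => //; lia.
have ekg : k - size g = n.+2 by lia.
have ha : 0 < a n.+2 by apply: a_gt0; lia.
set c := a n.+2 - 1.
have hc : c < a (k - size g) by rewrite ekg /c; lia.
rewrite -[n.+1]addn1 iotaD rev_cat /= -cat_rcons add2n -IH ?size_rcons;
  [|by apply: prefixA_rcons => //; lia|lia].
split=> hf y hy hgy; first exact: hf hy (prefix_trans (prefix_rcons g c) hgy).
have [|j hj hgjy] := inA_prefix_child hy hgy; first lia.
suff : full k a phi (rcons g j) by apply.
case: (ltngtP j c) => [hjc||->] //; last by rewrite /c -ekg; lia.
by apply: (proj2 (hmono g hg _ j c hjc hc)) => //; lia.
Qed.

End Listing.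

Theorem corollary1 (k : nat) (a : nat -> nat) :
  2 <= k ->
  (forall i, 2 <= i <= k -> 0 < a i) ->
  (forall i, 2 < i <= k -> a 2 <= a i) ->
  forall phi : seq nat -> bool, partial_listing k a phi ->
  forall beta : seq nat,
    1 <= size beta <= k - 1 ->
    (forall j, j < size beta -> nth 0 beta j < a (k - j)) ->
    let l := k - size beta in
    (nonempty k a phi beta <-> phi (beta ++ nseq (l - 1) 0)) /\
    (full k a phi beta <->
       phi (beta ++ [seq a i - 1 | i <- rev (iota 2 (l - 1))])).
Proof.
move=> _ a_gt0 _ phi hphi beta hsize hbeta l.
have hmono := partial_listing_mono a_gt0 hphi.
have hb : prefixA k a beta by split=> //; case/andP: hsize.
have hs : size beta + (l - 1) = k - 1 by rewrite /l; case/andP: hsize; lia.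
by split; [apply: nonempty_zeros | apply: full_maxs].
Qed.
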